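(* Let ${\tt V}$ be a closed real subspace of a complex Hilbert space $\mathcal{H}$ and $J$ a conjugation on $\mathcal{H}$. Then: (i) if ${\tt V}$ is $J$-positive, then $J{\tt V}\subseteq{\tt V}'$; (ii) if ${\tt V}+i{\tt V}$ is dense in $\mathcal{H}$ and $J{\tt V}\subseteq{\tt V}'$, then ${\tt V}\cap i{\tt V}=\{0\}$; (iii) if ${\tt V}$ is standard, then the following are equivalent: (a) $J=J_{\tt V}$; (b) ${\tt V}'$ is $J$-positive and $J{\tt V}\subseteq{\tt V}'$; (c) ${\tt V}$ and ${\tt V}'$ are both $J$-positive.
   Context: A conjugation is an antiunitary involution. ${\tt V}'=\{v\in\mathcal{H}:\operatorname{Im}\langle w,v\rangle=0\ \forall w\in{\tt V}\}$ (symplectic complement). ${\tt V}$ is $J$-positive if $\langle\xi,J\xi\rangle\ge0$ for all $\xi\in{\tt V}$. ${\tt V}$ is standard if ${\tt V}\cap i{\tt V}=\{0\}$ and ${\tt V}+i{\tt V}$ is dense; then the Tomita operator $T_{\tt V}(x+iy)=x-iy$ has polar decomposition $T_{\tt V}=J_{\tt V}\Delta_{\tt V}^{1/2}$ with $J_{\tt V}$ a conjugation and $\Delta_{\tt V}$ positive selfadjoint. *)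

From mathcomp Require Import all_boot all_order all_algebra.
From mathcomp Require Import reals.
From mathcomp.real_closed Require Export complex.
Import GRing.Theory Num.Theory.
Set Implicit Arguments. Unset Strict Implicit. Unset Printing Implicit Defensive.
Local Open Scope ring_scope.
Local Open Scope complex_scope.

Section Hilbert.
Variables (R : realType) (H : lmodType R[i]) (ip : H -> H -> R[i]).

Definition nsq (x : H) : R[i] := ip x x.

Definition converges_to (u : nat -> H) (l : H) : Prop :=
  forall e : R, 0 < e -> exists N : nat, forall n : nat, (N <= n)%N ->
    nsq (u n - l) < e%:C.

Definition cauchy_seq (u : nat -> H) : Prop :=
  forall e : R, 0 < e -> exists N : nat, forall m n : nat,
    (N <= m)%N -> (N <= n)%N -> nsq (u m - u n) < e%:C.

Definition is_hilbert : Prop :=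
  [/\ (forall x y, ip x y = (ip y x)^*),
      (forall x y z (a : R[i]), ip x (a *: y + z) = a * ip x y + ip x z),
      (forall x, 0 <= ip x x),
      (forall x, ip x x = 0 -> x = 0)
    & (forall u, cauchy_seq u -> exists l, converges_to u l)].

Definition real_subspace (V : H -> Prop) : Prop :=
  [/\ V 0,
      (forall x y, V x -> V y -> V (x + y))
    & (forall (r : R) x, V x -> V (r%:C *: x))].

Definition closed_set (V : H -> Prop) : Prop :=
  forall (u : nat -> H) (l : H), (forall n, V (u n)) -> converges_to u l -> V l.

Definition closed_real_subspace (V : H -> Prop) : Prop :=
  real_subspace V /\ closed_set V.

Definition dense (S : H -> Prop) : Prop :=
  forall (x : H) (e : R), 0 < e -> exists y, S y /\ nsq (x - y) < e%:C.

Definition sum_iV (V : H -> Prop) : H -> Prop :=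
  fun z => exists x y, [/\ V x, V y & z = x + 'i *: y].

Definition times_i (V : H -> Prop) : H -> Prop :=
  fun z => exists y, V y /\ z = 'i *: y.

Definition symp_compl (V : H -> Prop) : H -> Prop :=
  fun v => forall w, V w -> 'Im (ip w v) = 0.

Definition conjugation (J : H -> H) : Prop :=
  [/\ (forall x y, J (x + y) = J x + J y),
      (forall (a : R[i]) x, J (a *: x) = a^* *: J x),
      (forall x y, ip (J x) (J y) = ip y x)
    & (forall x, J (J x) = x)].

Definition J_positive (J : H -> H) (V : H -> Prop) : Prop :=
  forall xi, V xi -> 0 <= ip xi (J xi).

Definition standard (V : H -> Prop) : Prop :=
  (forall z, V z -> times_i V z -> z = 0) /\ dense (sum_iV V).

(* Unbounded operators: a domain D together with a function A (values of A
   outside D are irrelevant).  A is positive selfadjoint iff D is a dense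
   complex subspace, A is linear on D, A = A^* (including equality of
   domains: eta is in D iff xi |-> <eta, A xi> is represented on D by some
   vector zeta, and then A eta represents it), and <xi, A xi> >= 0 on D. *)
Definition pos_selfadjoint (D : H -> Prop) (A : H -> H) : Prop :=
  (D 0 /\ dense D) /\
  [/\ (forall (a : R[i]) x y, D x -> D y -> D (a *: x + y)
            /\ A (a *: x + y) = a *: A x + A y),
      (forall eta, D eta <->
         exists zeta, forall xi, D xi -> ip eta (A xi) = ip zeta xi),
      (forall eta xi, D eta -> D xi -> ip eta (A xi) = ip (A eta) xi)
    & (forall xi, D xi -> 0 <= ip xi (A xi))].

(* The Tomita operator T_V (x + iy) = x - iy on V + iV (V standard).
   "J is the modular conjugation J_V" : T_V = J Delta^{1/2} is the polar
   decomposition, i.e. there is a positive selfadjoint operator A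
   (= Delta_V^{1/2}) with domain dom(T_V) = V + iV and T_V = J A. *)
Definition is_modular_conj (V : H -> Prop) (J : H -> H) : Prop :=
  exists (D : H -> Prop) (A : H -> H),
    [/\ pos_selfadjoint D A,
        (forall z, D z <-> sum_iV V z)
      & (forall x y, V x -> V y -> J (A (x + 'i *: y)) = x - 'i *: y)].

End Hilbert.

(* (i) For xi, eta in V, positivity of <xi + eta, J (xi + eta)> and the symmetry
   <xi, J eta> = <eta, J xi> of an antiunitary involution force Im <eta, J xi> = 0.
   (ii) If J V lies in V' and z = i y with y, z in V, then <w, J z> = -i <w, J y>
   has vanishing real and imaginary parts for w in V, so J z is orthogonal to the
   dense space V + iV.
   (iii) The relation J Delta^(1/2) (x + iy) = x - iy makes Delta^(1/2) = J on V,
   and the symmetry of Delta^(1/2) then gives J V in V'. For xi in V' the functional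
   z |-> <J xi, Delta^(1/2) z> is <xi, z>, whence Delta^(1/2) J xi = xi and
   <xi, J xi> = <Delta^(1/2) J xi, J xi> >= 0. Conversely, if V and V' are
   J-positive, A (x + iy) := J x + i J y is well defined (V is standard), symmetric
   and positive on V + iV. It is selfadjoint: a vector eta in the domain of its
   adjoint splits as J eta = a + i b with a, b in V', and J V' lies in V'' = V, the
   last equality being the projection theorem for closed real subspaces. *)

From mathcomp Require Import all_boot all_order all_algebra.
From mathcomp Require Import boolp classical_sets reals.
From mathcomp.real_closed Require Import complex.
From mathcomp Require Import lra.
Import GRing.Theory Num.Theory Order.TTheory.
Set Implicit Arguments. Unset Strict Implicit. Unset Printing Implicit Defensive.
Local Open Scope ring_scope.
Local Open Scope complex_scope.

Section ComplexFacts.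
Variable R : realType.
Implicit Types z : R[i].

Lemma ger0_Im0 z : 0 <= z -> 'Im z = 0.
Proof. by move/ger0_real/Creal_ImP. Qed.

Lemma Im0_conj z : 'Im z = 0 -> (z^*)%R = z.
Proof. by move/Creal_ImP/CrealP. Qed.

Lemma conj_Im0 z : (z^*)%R = z -> 'Im z = 0.
Proof. by move/CrealP/Creal_ImP. Qed.

Lemma Im_realM (r : R) z : 'Im (r%:C * z) = r%:C * 'Im z.
Proof. by rewrite ImMl // complex_real. Qed.

Lemma scale_rect (H : lmodType R[i]) (a : R[i]) (u : H) :
  a *: u = (complex.Re a)%:C *: u + (complex.Im a)%:C *: ('i *: u).
Proof. by rewrite scalerA -scalerDl mulrC -complexiE -complexE. Qed.

End ComplexFacts.

Section ComplexSpan.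
Variables (R : realType) (H : lmodType R[i]) (V : H -> Prop).
Hypothesis V_subspace : real_subspace V.

Let VD x y : V x -> V y -> V (x + y). Proof. by case: V_subspace => _ + _; apply. Qed.
Let VZ (r : R) x : V x -> V (r%:C *: x). Proof. by case: V_subspace => _ _; apply. Qed.

Lemma scale_ii (u : H) : 'i *: ('i *: u) = - u.
Proof. by rewrite scalerA -expr2 sqrCi scaleN1r. Qed.

Lemma sum_iV_rect x y : V x -> V y -> sum_iV V (x + 'i *: y).
Proof. by move=> Vx Vy; exists x, y. Qed.

Lemma sum_iV_V x : V x -> sum_iV V x.
Proof. by case: V_subspace => V0 _ _ Vx; exists x, 0; rewrite scaler0 addr0. Qed.

Lemma sum_iV0 : sum_iV V 0.
Proof. by case: V_subspace => V0 _ _; apply: sum_iV_V. Qed.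

Lemma sum_iVD u v : sum_iV V u -> sum_iV V v -> sum_iV V (u + v).
Proof.
move=> [x1 [y1 [Vx1 Vy1 ->]]] [x2 [y2 [Vx2 Vy2 ->]]].
by rewrite addrACA -scalerDr; apply: sum_iV_rect; apply: VD.
Qed.

Lemma sum_iVZ a u : sum_iV V u -> sum_iV V (a *: u).
Proof.
have VN x : V x -> V (- x) by rewrite -scaleN1r -(rmorphN1 (real_complex R)); apply: VZ.
have iZ v : sum_iV V v -> sum_iV V ('i *: v).
  move=> [x [y [Vx Vy ->]]]; rewrite scalerDr scale_ii addrC.
  by apply: sum_iV_rect => //; apply: VN.
have rZ (r : R) v : sum_iV V v -> sum_iV V (r%:C *: v).
  move=> [x [y [Vx Vy ->]]]; rewrite scalerDr !scalerA mulrC -scalerA.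
  by apply: sum_iV_rect; apply: VZ.
by move=> Vu; rewrite scale_rect; apply: sum_iVD; apply: rZ => //; apply: iZ.
Qed.

End ComplexSpan.

Lemma lin_le_quad_eq0 (F : realFieldType) (c n : F) :
  0 <= n -> (forall t, t * c <= t ^+ 2 * n) -> c = 0.
Proof.
move=> n_ge0 le_cn; set s := (n + 1)^-1.
have s_gt0 : 0 < s by rewrite invr_gt0; lra.
have sn1 : s * (n + 1) = 1 by rewrite mulVf //; lra.
have := le_cn (c * s); rewrite expr2 => h.
have : c * c * (s * s) <= 0 by nra.
rewrite pmulr_lle0 ?mulr_gt0 // -expr2 => c2_le0.
by apply/eqP; rewrite -sqrf_eq0 eq_le c2_le0 sqr_ge0.
Qed.

Section Hilbert.
Variables (R : realType) (H : lmodType R[i]) (ip : H -> H -> R[i]).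
Hypothesis ipC : forall x y, ip x y = (ip y x)^*.
Hypothesis ipL : forall x y z (a : R[i]), ip x (a *: y + z) = a * ip x y + ip x z.
Hypothesis ip_ge0 : forall x, 0 <= ip x x.
Hypothesis ip_eq0 : forall x, ip x x = 0 -> x = 0.
Hypothesis ip_complete : forall u, cauchy_seq ip u -> exists l, converges_to ip u l.

(* [ipC] uses [complex.conjc], which is convertible to the [Num.conj] of [ssrnum]. *)
Lemma ip_conj x y : ip x y = ((ip y x)^*)%R.
Proof. exact: ipC. Qed.

Lemma ipDr x y z : ip x (y + z) = ip x y + ip x z.
Proof. by have := ipL x y z 1; rewrite scale1r mul1r. Qed.

Lemma ipr0 x : ip x 0 = 0.
Proof. by apply: (@addrI _ (ip x 0)); rewrite -ipDr !addr0. Qed.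

Lemma ipZr x y a : ip x (a *: y) = a * ip x y.
Proof. by rewrite -[a *: y]addr0 ipL ipr0 addr0. Qed.

Lemma ipNr x y : ip x (- y) = - ip x y.
Proof. by rewrite -scaleN1r ipZr mulN1r. Qed.

Lemma ipBr x y z : ip x (y - z) = ip x y - ip x z.
Proof. by rewrite ipDr ipNr. Qed.

Lemma ipDl x y z : ip (x + y) z = ip x z + ip y z.
Proof. by rewrite ip_conj ipDr rmorphD /= -!ip_conj. Qed.

Lemma ipZl x y a : ip (a *: x) y = a^* * ip x y.
Proof. by rewrite ip_conj ipZr rmorphM /= -ip_conj. Qed.

Lemma ipNl x y : ip (- x) y = - ip x y.
Proof. by rewrite ip_conj ipNr rmorphN /= -ip_conj. Qed.

Lemma Im_ip_iZr x y : 'Im (ip x ('i *: y)) = 'Re (ip x y).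
Proof. by rewrite ipZr ImMil. Qed.

Lemma Im_ip_iZl x y : 'Im (ip ('i *: x) y) = - 'Re (ip x y).
Proof. by rewrite ipZl conjCi mulNr raddfN /= ImMil. Qed.

Definition rdot x y : R := complex.Re (ip x y).
Definition norm2 x : R := rdot x x.

Lemma rdotE x y : (rdot x y)%:C = 'Re (ip x y).
Proof. exact: complexRe. Qed.

Lemma Re_ip_eq0 x y : 'Re (ip x y) = 0 <-> rdot x y = 0.
Proof. by rewrite -rdotE; split=> [[]|->]. Qed.

Lemma rdotC x y : rdot x y = rdot y x.
Proof. by rewrite /rdot ipC; case: (ip y x). Qed.

Lemma rdotDr x y z : rdot x (y + z) = rdot x y + rdot x z.
Proof. by rewrite /rdot ipDr raddfD. Qed.

Lemma rdotNr x y : rdot x (- y) = - rdot x y.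
Proof. by rewrite /rdot ipNr raddfN. Qed.

Lemma rdotZr x y (r : R) : rdot x (r%:C *: y) = r * rdot x y.
Proof. by rewrite /rdot ipZr; case: (ip x y) => a b; simpc. Qed.

Lemma rdotDl x y z : rdot (x + y) z = rdot x z + rdot y z.
Proof. by rewrite !(rdotC _ z) rdotDr. Qed.

Lemma rdotNl x y : rdot (- x) y = - rdot x y.
Proof. by rewrite !(rdotC _ y) rdotNr. Qed.

Lemma rdotBl x y z : rdot (x - y) z = rdot x z - rdot y z.
Proof. by rewrite rdotDl rdotNl. Qed.

Lemma rdotZl x y (r : R) : rdot (r%:C *: x) y = r * rdot x y.
Proof. by rewrite !(rdotC _ y) rdotZr. Qed.

Lemma ip_norm2 x : ip x x = (norm2 x)%:C.
Proof.
by have := ger0_Im (ip_ge0 x); rewrite /norm2 /rdot; case: (ip x x) => a b /= ->.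
Qed.

Lemma nsq_norm2 x : nsq ip x = (norm2 x)%:C.
Proof. exact: ip_norm2. Qed.

Lemma norm2_ge0 x : 0 <= norm2 x.
Proof. by rewrite -lecR -ip_norm2. Qed.

Lemma norm2_eq0 x : norm2 x = 0 -> x = 0.
Proof. by move=> x0; apply: ip_eq0; rewrite ip_norm2 x0. Qed.

Lemma norm2D x y : norm2 (x + y) = norm2 x + 2 * rdot x y + norm2 y.
Proof. by rewrite /norm2 rdotDl !rdotDr (rdotC y x); lra. Qed.

Lemma norm2B x y : norm2 (x - y) = norm2 x - 2 * rdot x y + norm2 y.
Proof. by rewrite norm2D rdotNr /norm2 rdotNl rdotNr opprK mulrN. Qed.

Lemma norm2Z x (r : R) : norm2 (r%:C *: x) = r ^+ 2 * norm2 x.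
Proof. by rewrite /norm2 rdotZl rdotZr mulrA expr2. Qed.

Lemma rdot_sqr_le x y : rdot x y ^+ 2 <= norm2 x * norm2 y.
Proof.
have := norm2_ge0 y; rewrite le_eqVlt => /predU1P[y0 | y_gt0].
  by rewrite -y0 (norm2_eq0 (esym y0)) /rdot ipr0 expr0n mulr0.
have := norm2_ge0 ((norm2 y)%:C *: x - (rdot x y)%:C *: y).
rewrite norm2B !norm2Z rdotZl rdotZr; nra.
Qed.

Lemma dense_ortho_eq0 S u : dense ip S -> (forall s, S s -> ip s u = 0) -> u = 0.
Proof.
move=> S_dense u_ortho; apply: norm2_eq0.
have := norm2_ge0 u; rewrite le_eqVlt => /predU1P[<- // | u_gt0].
have [y [Sy]] := S_dense u (norm2 u) u_gt0.
rewrite nsq_norm2 ltcR norm2B rdotC /rdot u_ortho // => lt.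
by have := norm2_ge0 y; lra.
Qed.

Lemma cvg_rdot u l w : converges_to ip u l ->
  forall e, 0 < e -> exists N, forall n, (N <= n)%N -> `|rdot (u n - l) w| < e.
Proof.
move=> u_cvg e e_gt0; have w_ge0 := norm2_ge0 w.
have d_gt0 : 0 < e ^+ 2 / (norm2 w + 1).
  by rewrite divr_gt0 ?exprn_gt0 //; lra.
have [N hN] := u_cvg _ d_gt0; exists N => n /hN.
rewrite nsq_norm2 ltcR ltr_pdivlMr; last by lra.
move=> dist_lt; have cs := rdot_sqr_le (u n - l) w.
have dist_ge0 := norm2_ge0 (u n - l).
by rewrite ltr_norml; apply/andP; split; nra.
Qed.

Lemma half_sum (u : H) : (2^-1)%:C *: (u + u) = u.
Proof.
rewrite -mulr2n -scaler_nat scalerA -(rmorph_nat (real_complex R)) -rmorphM /=.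
by rewrite mulVf ?pnatr_eq0 // scale1r.
Qed.

Section Projection.
Variable V : H -> Prop.
Hypothesis V_subspace : real_subspace V.
Hypothesis V_closed : closed_set ip V.
Variable h : H.

Let VD x y : V x -> V y -> V (x + y). Proof. by case: V_subspace => _ + _; apply. Qed.
Let VZ (r : R) x : V x -> V (r%:C *: x). Proof. by case: V_subspace => _ _; apply. Qed.

Definition dist2 : R := inf (fun r => exists2 v, V v & norm2 (h - v) = r).

Lemma dist2_le v : V v -> dist2 <= norm2 (h - v).
Proof.
move=> Vv; apply: ge_inf; last by exists v.
by exists 0 => _ [w _ <-]; apply: norm2_ge0.
Qed.

Definition minimizing (vs : nat -> H) :=
  forall e, 0 < e -> exists N, forall n, (N <= n)%N -> norm2 (h - vs n) < dist2 + e.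

Lemma minimizing_seq_ex : exists2 vs, forall n, V (vs n) & minimizing vs.
Proof.
have V0 : V 0 by case: V_subspace.
have dist2_inf : has_inf (fun r => exists2 v, V v & norm2 (h - v) = r).
  split; first by exists (norm2 (h - 0)), 0.
  by exists 0 => _ [w _ <-]; apply: norm2_ge0.
suff /choice[vs /all_and2[V_vs vs_min]] :
    forall n, exists v, V v /\ norm2 (h - v) < dist2 + n.+1%:R^-1.
  exists vs => // e e_gt0; have [k] := ltr_add_invr e_gt0; rewrite add0r => k_lt.
  exists k => n kn; apply: lt_trans (vs_min n) _; rewrite ltrD2l.
  by apply: le_lt_trans k_lt; rewrite lef_pV2 ?posrE ?ltr0Sn // ler_nat ltnS.
move=> n; have n_gt0 : 0 < n.+1%:R^-1 :> R by rewrite invr_gt0 ltr0Sn.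
by have [_ [v Vv <-] lt] := inf_adherent n_gt0 dist2_inf; exists v.
Qed.

Section MinimizingSequence.
Variable vs : nat -> H.
Hypothesis V_vs : forall n, V (vs n).
Hypothesis vs_min : minimizing vs.

Lemma minimizing_seq_cauchy : cauchy_seq ip vs.
Proof.
have near m n :
    norm2 (vs m - vs n) <=
    2 * (norm2 (h - vs m) - dist2) + 2 * (norm2 (h - vs n) - dist2).
  have mid_le := dist2_le (VZ (2^-1) (VD (V_vs m) (V_vs n))).
  (* parallelogram law for [h - vs m] and [h - vs n], whose midpoint is [h]
     minus a point of [V] *)
  have -> : vs m - vs n = (h - vs n) - (h - vs m).
    by rewrite opprB [RHS]addrC addrA subrK.
  have mid :
      h - (2^-1)%:C *: (vs m + vs n) = (2^-1)%:C *: ((h - vs m) + (h - vs n)).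
    by rewrite addrACA -opprD scalerBr half_sum.
  rewrite mid norm2Z norm2D in mid_le; rewrite norm2B (rdotC (h - vs n)); lra.
move=> e e_gt0; have e4_gt0 : 0 < e / 4 by rewrite divr_gt0.
have [N hN] := vs_min e4_gt0; exists N => m n Nm Nn.
rewrite nsq_norm2 ltcR; apply: le_lt_trans (near m n) _.
by have := hN m Nm; have := hN n Nn; lra.
Qed.

Lemma minimizing_limit_orth p : converges_to ip vs p ->
  forall w, V w -> rdot (h - p) w = 0.
Proof.
move=> vs_cvg w Vw; set c := rdot (h - p) w.
suff : 2 * c = 0 by lra.
apply: (lin_le_quad_eq0 (norm2_ge0 w)) => t; apply/ler_addgt0Pr => e e_gt0.
(* [vs n + t w] is in [V], hence no closer to [h] than [dist2] *)
have step n :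
    2 * t * (c - rdot (vs n - p) w) <= norm2 (h - vs n) - dist2 + t ^+ 2 * norm2 w.
  have := dist2_le (VD (V_vs n) (VZ t Vw)).
  have -> : c - rdot (vs n - p) w = rdot (h - vs n) w.
    by rewrite -rdotBl opprB addrA subrK.
  by rewrite opprD addrA norm2B norm2Z rdotZr; lra.
have [N1 hN1] := vs_min (divr_gt0 e_gt0 (ltr0Sn _ 1)).
(* [e'] is small enough to make the error term [2 t rdot (vs n - p) w] less than [e / 2] *)
set e' := e / (4 * (`|t| + 1)).
have e'_gt0 : 0 < e' by rewrite divr_gt0 // mulr_gt0 // ltr_pwDr.
have [N2 hN2] := cvg_rdot w vs_cvg e'_gt0.
set n := maxn N1 N2; set r := rdot (vs n - p) w.
have r_lt := hN2 n (leq_maxr _ _).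
have tr_le : t * r <= `|t| * `|r| by rewrite -normrM ler_norm.
have e'E : e' * (4 * (`|t| + 1)) = e.
  by rewrite /e' mulfVK // mulf_neq0 // gt_eqF // ltr_pwDr.
have := step n; have := hN1 n (leq_maxl _ _); have := normr_ge0 t; nra.
Qed.

End MinimizingSequence.

Lemma closed_real_subspace_proj :
  exists2 p, V p & forall w, V w -> rdot (h - p) w = 0.
Proof.
have [vs V_vs vs_min] := minimizing_seq_ex.
have [p vs_cvg] := ip_complete (minimizing_seq_cauchy V_vs vs_min).
exists p; first exact: V_closed V_vs vs_cvg.
exact: minimizing_limit_orth.
Qed.

Lemma symp_compl2_sub : symp_compl ip (symp_compl ip V) h -> V h.
Proof.
move=> h_V''; have [p Vp p_orth] := closed_real_subspace_proj.
have V'_q : symp_compl ip V ('i *: (h - p)).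
  by move=> w Vw; rewrite Im_ip_iZr; apply/Re_ip_eq0; rewrite rdotC p_orth.
have orth_h : rdot (h - p) h = 0.
  by apply/Re_ip_eq0/oppr_inj; rewrite oppr0 -Im_ip_iZl h_V''.
have /norm2_eq0/eqP : norm2 (h - p) = 0.
  by rewrite /norm2 rdotDr rdotNr orth_h p_orth // subr0.
by rewrite subr_eq0 => /eqP ->.
Qed.

End Projection.

Lemma symp_complD V a b :
  symp_compl ip V a -> symp_compl ip V b -> symp_compl ip V (a + b).
Proof. by move=> V'a V'b w Vw; rewrite ipDr raddfD /= V'a ?V'b ?addr0. Qed.

Section Conjugation.
Variable J : H -> H.
Hypothesis JD : forall x y, J (x + y) = J x + J y.
Hypothesis JZ : forall (a : R[i]) x, J (a *: x) = a^* *: J x.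
Hypothesis JU : forall x y, ip (J x) (J y) = ip y x.
Hypothesis JJ : forall x, J (J x) = x.

Lemma J0 : J 0 = 0.
Proof. by apply: (@addrI _ (J 0)); rewrite -JD !addr0. Qed.

Lemma JN x : J (- x) = - J x.
Proof. by apply: (@addrI _ (J x)); rewrite -JD !subrr J0. Qed.

Lemma J_realZ (r : R) x : J (r%:C *: x) = r%:C *: J x.
Proof. by rewrite JZ; congr (_ *: _); apply: conjc_real. Qed.

Lemma ip_J_sym x y : ip x (J y) = ip y (J x).
Proof. by rewrite -{1}(JJ x) JU. Qed.

Lemma Jpos_symp_compl W : (forall x y, W x -> W y -> W (x + y)) ->
  J_positive ip J W -> forall x, W x -> symp_compl ip W (J x).
Proof.
move=> WD W_pos x Wx w Ww; have := ger0_Im0 (W_pos _ (WD _ _ Ww Wx)).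
rewrite JD ipDl !ipDr (ip_J_sym x w) !raddfD /=.
rewrite (ger0_Im0 (W_pos _ Ww)) (ger0_Im0 (W_pos _ Wx)).
by move/eqP; rewrite add0r addr0 -mulr2n mulrn_eq0 => /eqP.
Qed.

Lemma J_symp_compl_separating V : dense ip (sum_iV V) ->
  (forall x, V x -> symp_compl ip V (J x)) -> forall z, V z -> times_i V z -> z = 0.
Proof.
move=> V_dense JV z Vz [y [Vy ez]].
have Jz_orth w : V w -> ip w (J z) = 0.
  move=> Vw; have /eqP := JV z Vz w Vw.
  rewrite {1}ez JZ ipZr conjCi mulNr raddfN /= ImMil oppr_eq0 => /eqP Re0.
  by rewrite ez JZ ipZr [ip w (J y)]Crect Re0 (JV y Vy w Vw) mulr0 add0r mulr0.
suff Jz0 : J z = 0 by rewrite -[z]JJ Jz0 J0.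
apply: (dense_ortho_eq0 V_dense) => _ [a [b [Va Vb ->]]].
by rewrite ipDl ipZl !Jz_orth // mulr0 addr0.
Qed.

Lemma Jpos_of_symp_compl V : J_positive ip J (symp_compl ip V) ->
  (forall x, V x -> symp_compl ip V (J x)) -> J_positive ip J V.
Proof.
move=> V'_pos JV x Vx; rewrite ip_conj conjC_ge0 -{2}(JJ x).
exact/V'_pos/JV.
Qed.

Section TomitaPolar.
Variables (V D : H -> Prop) (A : H -> H).
Hypothesis V_subspace : real_subspace V.
Hypothesis A_psa : pos_selfadjoint ip D A.
Hypothesis D_sum_iV : forall z, D z <-> sum_iV V z.
Hypothesis JA : forall x y, V x -> V y -> J (A (x + 'i *: y)) = x - 'i *: y.

Let D_dense : dense ip D. Proof. by case: A_psa => [[]]. Qed.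
Let A_dom eta : D eta <-> exists zeta, forall xi, D xi -> ip eta (A xi) = ip zeta xi.
Proof. by case: A_psa => _ [_ dom _ _]; apply: dom. Qed.
Let A_sym eta xi : D eta -> D xi -> ip eta (A xi) = ip (A eta) xi.
Proof. by case: A_psa => _ [_ _ sym _]; apply: sym. Qed.
Let A_pos xi : D xi -> 0 <= ip xi (A xi).
Proof. by case: A_psa => _ [_ _ _ pos]; apply: pos. Qed.

Let D_V x : V x -> D x.
Proof. by move=> Vx; apply/D_sum_iV/sum_iV_V. Qed.

Let V0 : V 0. Proof. by case: V_subspace. Qed.

Let A_V x : V x -> A x = J x.
Proof.
move=> Vx; have := JA Vx V0; rewrite scaler0 addr0 subr0.
by move=> /(congr1 J); rewrite JJ.
Qed.

Lemma modular_J_symp_compl x : V x -> symp_compl ip V (J x).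
Proof.
move=> Vx w Vw; apply: conj_Im0; have [Dx Dw] := (D_V Vx, D_V Vw).
by rewrite -{2}(A_V Vx) A_sym // A_V // [RHS]ip_conj ip_J_sym.
Qed.

Lemma modular_Jpos_symp_compl : J_positive ip J (symp_compl ip V).
Proof.
move=> xi V'xi.
(* [z |-> ip (J xi) (A z)] is represented by [xi], so selfadjointness gives [A (J xi) = xi] *)
have JxiA z : D z -> ip (J xi) (A z) = ip xi z.
  move=> /D_sum_iV[x [y [Vx Vy ->]]].
  rewrite -[A _]JJ JA // JU ipDl ipNl ipZl !ipDr ipZr conjCi mulNr opprK.
  rewrite [ip xi x]ip_conj (Im0_conj (V'xi x Vx)).
  by rewrite [ip xi y]ip_conj (Im0_conj (V'xi y Vy)).
have DJxi : D (J xi) by apply/A_dom; exists xi.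
have AJxi : A (J xi) = xi.
  apply/eqP; rewrite -subr_eq0; apply/eqP; apply: (dense_ortho_eq0 D_dense) => z Dz.
  by rewrite ipBr ip_conj -A_sym // JxiA // -ip_conj subrr.
by rewrite -{1}AJxi ip_conj conjC_ge0 A_pos.
Qed.

End TomitaPolar.

Section ModularConjugation.
Variable V : H -> Prop.
Hypothesis V_subspace : real_subspace V.
Hypothesis V_closed : closed_set ip V.
Hypothesis V_standard : standard ip V.
Hypothesis V_pos : J_positive ip J V.
Hypothesis V'_pos : J_positive ip J (symp_compl ip V).

Let VD x y : V x -> V y -> V (x + y). Proof. by case: V_subspace => _ + _; apply. Qed.
Let VN x : V x -> V (- x).
Proof.
by case: V_subspace => _ _ VZ; rewrite -scaleN1r -(rmorphN1 (real_complex R)); apply: VZ.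
Qed.

Lemma sum_iV_rect_inj x y x' y' : V x -> V y -> V x' -> V y' ->
  x + 'i *: y = x' + 'i *: y' -> x = x' /\ y = y'.
Proof.
move=> Vx Vy Vx' Vy' e.
have e' : x - x' = 'i *: (y' - y).
  rewrite scalerBr; apply: (addIr ('i *: y)).
  by rewrite subrK addrAC e [LHS]addrC addKr.
have /eqP : x - x' = 0.
  apply: V_standard.1; first by apply: VD => //; apply: VN.
  by exists (y' - y); split=> //; apply: VD => //; apply: VN.
rewrite subr_eq0 => /eqP xx'; split=> //.
move: e'; rewrite xx' subrr => /esym/eqP; rewrite scaler_eq0 (negPf (neq0Ci _)) /=.
by rewrite subr_eq0 => /eqP.
Qed.

(* The components of [z] in the direct sum [V + iV] (junk [(0, 0)] outside of it). *)
Definition Vparts z : H * H :=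
  xget (0, 0) (fun pq => [/\ V pq.1, V pq.2 & z = pq.1 + 'i *: pq.2]).

(* The polar factor [Delta^(1/2) = J T] of the Tomita operator [T (x + iy) = x - iy]. *)
Definition delta_sqrt z := J (Vparts z).1 + 'i *: J (Vparts z).2.

Lemma delta_sqrt_rect x y : V x -> V y -> delta_sqrt (x + 'i *: y) = J x + 'i *: J y.
Proof.
move=> Vx Vy; rewrite /delta_sqrt; suff -> : Vparts (x + 'i *: y) = (x, y) by [].
apply: xget_unique => [|[x' y'] [/= Vx' Vy' e]]; first by split.
by have [-> ->] := sum_iV_rect_inj Vx Vy Vx' Vy' e.
Qed.

Lemma delta_sqrt_V x : V x -> delta_sqrt x = J x.
Proof.
case: V_subspace => V0 _ _ Vx.
by have := delta_sqrt_rect Vx V0; rewrite J0 !scaler0 !addr0.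
Qed.

Lemma delta_sqrtD u v : sum_iV V u -> sum_iV V v ->
  delta_sqrt (u + v) = delta_sqrt u + delta_sqrt v.
Proof.
move=> [x1 [y1 [Vx1 Vy1 ->]]] [x2 [y2 [Vx2 Vy2 ->]]].
have [Vx Vy] := (VD Vx1 Vx2, VD Vy1 Vy2).
by rewrite addrACA -scalerDr !delta_sqrt_rect // !JD scalerDr addrACA.
Qed.

Lemma delta_sqrt_realZ (r : R) u :
  sum_iV V u -> delta_sqrt (r%:C *: u) = r%:C *: delta_sqrt u.
Proof.
case: V_subspace => _ _ VZ [x [y [Vx Vy ->]]]; have [Vrx Vry] := (VZ r _ Vx, VZ r _ Vy).
rewrite scalerDr !scalerA mulrC -scalerA !delta_sqrt_rect //.
by rewrite !J_realZ scalerDr !scalerA mulrC.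
Qed.

Lemma delta_sqrt_iZ u : sum_iV V u -> delta_sqrt ('i *: u) = 'i *: delta_sqrt u.
Proof.
move=> [x [y [Vx Vy ->]]]; have VNy := VN Vy.
rewrite scalerDr scale_ii addrC !delta_sqrt_rect //.
by rewrite JN scalerDr scale_ii addrC.
Qed.

Lemma delta_sqrtZ a u : sum_iV V u -> delta_sqrt (a *: u) = a *: delta_sqrt u.
Proof.
move=> Vu; have ViU := sum_iVZ V_subspace 'i Vu.
have VRe := sum_iVZ V_subspace (complex.Re a)%:C Vu.
have VIm := sum_iVZ V_subspace (complex.Im a)%:C ViU.
by rewrite scale_rect delta_sqrtD // !delta_sqrt_realZ // delta_sqrt_iZ // -scale_rect.
Qed.

Lemma ip_J_swap p q : V p -> V q -> ip (J p) q = ip p (J q).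
Proof.
move=> Vp Vq; have Im0 := Jpos_symp_compl VD V_pos Vp Vq.
by rewrite ip_conj (Im0_conj Im0) ip_J_sym.
Qed.

Lemma delta_sqrt_sym eta xi : sum_iV V eta -> sum_iV V xi ->
  ip eta (delta_sqrt xi) = ip (delta_sqrt eta) xi.
Proof.
move=> [x1 [y1 [Vx1 Vy1 ->]]] [x2 [y2 [Vx2 Vy2 ->]]].
rewrite !delta_sqrt_rect // !ipDl !ipDr !ipZl !ipZr.
by rewrite !ip_J_swap.
Qed.

Lemma delta_sqrt_ge0 xi : sum_iV V xi -> 0 <= ip xi (delta_sqrt xi).
Proof.
move=> [x [y [Vx Vy ->]]].
rewrite delta_sqrt_rect // !ipDl !ipDr !ipZl !ipZr (ip_J_sym y x) conjCi.
rewrite !mulNr mulrA -expr2 sqrCi mulN1r opprK -addrA addNKr.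
by apply: addr_ge0; apply: V_pos.
Qed.

Lemma J_symp_compl_sub a : symp_compl ip V a -> V (J a).
Proof.
move=> V'a; apply: (symp_compl2_sub V_subspace V_closed).
exact: (Jpos_symp_compl (W := symp_compl ip V) (@symp_complD V) V'_pos V'a).
Qed.

Lemma delta_sqrt_dom eta : sum_iV V eta <->
  exists zeta, forall xi, sum_iV V xi -> ip eta (delta_sqrt xi) = ip zeta xi.
Proof.
split=> [V_eta | [zeta eta_adj]].
  by exists (delta_sqrt eta) => xi V_xi; apply: delta_sqrt_sym.
set u := J eta.
have u_adj x : V x -> ip x u = ip zeta x.
  move=> Vx; rewrite -eta_adj; last exact: sum_iV_V.
  by rewrite delta_sqrt_V // ip_J_sym.
(* [J eta = a + i b] with [a], [b] in [V'], so [eta = J a - i J b] with [J a], [J b] in [V] *)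
set a := (2^-1)%:C *: (u + zeta); set b := (2^-1)%:C *: ('i *: (zeta - u)).
have V'a : symp_compl ip V a.
  move=> x Vx; rewrite ipZr ipDr u_adj // [ip x zeta]ip_conj.
  by rewrite Im_realM raddfD /= Im_conj subrr mulr0.
have V'b : symp_compl ip V b.
  move=> x Vx; rewrite ipZr Im_realM Im_ip_iZr ipBr u_adj // [ip x zeta]ip_conj.
  by rewrite raddfB /= Re_conj subrr mulr0.
have -> : eta = J a + 'i *: - J b.
  rewrite -[eta]JJ -/u scalerN -scaleNr -conjCi -JZ -JD; congr J.
  rewrite /a /b scalerA mulrC -scalerA scale_ii opprB -scalerDr.
  by rewrite addrACA subrr addr0 half_sum.
by exists (J a), (- J b); split=> //; [apply: J_symp_compl_sub | apply/VN/J_symp_compl_sub].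
Qed.

Lemma delta_sqrt_modular_conj : is_modular_conj ip V J.
Proof.
exists (sum_iV V), delta_sqrt; split=> [| // | x y Vx Vy].
  split; first by split; [exact: sum_iV0 | exact: V_standard.2].
  split; [|exact: delta_sqrt_dom|exact: delta_sqrt_sym|exact: delta_sqrt_ge0].
  move=> c x y Vx Vy; split; first by apply: sum_iVD => //; apply: sum_iVZ.
  by rewrite delta_sqrtD ?delta_sqrtZ //; apply: sum_iVZ.
by rewrite delta_sqrt_rect // JD JZ !JJ conjCi scaleNr.
Qed.

End ModularConjugation.

End Conjugation.

End Hilbert.

Theorem lemmaA6 (R : realType) (H : lmodType R[i]) (ip : H -> H -> R[i])
  (V : H -> Prop) (J : H -> H) :
  is_hilbert ip -> closed_real_subspace ip V -> conjugation ip J ->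
  [/\ (J_positive ip J V ->
         forall x, V x -> symp_compl ip V (J x)),
      (dense ip (sum_iV V) -> (forall x, V x -> symp_compl ip V (J x)) ->
         forall z, V z -> times_i V z -> z = 0)
    & (standard ip V ->
         [/\ (is_modular_conj ip V J ->
                J_positive ip J (symp_compl ip V) /\
                (forall x, V x -> symp_compl ip V (J x))),
             (J_positive ip J (symp_compl ip V) /\
                (forall x, V x -> symp_compl ip V (J x)) ->
                J_positive ip J V /\ J_positive ip J (symp_compl ip V))
           & (J_positive ip J V /\ J_positive ip J (symp_compl ip V) ->
                is_modular_conj ip V J)])].
Proof.
case=> ipC ipL ip_ge0 ip_eq0 ip_complete [V_subspace V_closed] [JD JZ JU JJ].
have VD : forall x y, V x -> V y -> V (x + y) by case: V_subspace.
split; first exact: Jpos_symp_compl.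
  exact: J_symp_compl_separating.
move=> V_standard; split.
- case=> D [A [A_psa D_sum_iV JA]]; split.
    exact: modular_Jpos_symp_compl A_psa D_sum_iV JA.
  exact: modular_J_symp_compl A_psa D_sum_iV JA.
- by case=> V'_pos JV; split=> //; apply: Jpos_of_symp_compl.
- by case=> V_pos V'_pos; apply: delta_sqrt_modular_conj.
Qed.
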